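(* Let $G=(V,E)$ be a graph with $n=|V|$. For all $i\in[0,n]$ and $v\in V$, we have $D_{i,v}=S_{i,v}$, where $S_{i,v}=\{v\}\cup\bigcup\{M_{v,w}\mid w\in V,\ p_v([w]_v)=i\}$.
   Context: Graphs are finite, simple, undirected, with nonempty vertex set. A module of $G=(V,E)$ is a nonempty $M\subseteq V$ such that every $u\in V\setminus M$ is adjacent either to all or to none of the vertices of $M$. For $|V|>1$ and $v\in V$, $D_G(v)$ is: the connected component of $G$ containing $v$ if $G$ is disconnected; otherwise the connected component of $\overline{G}$ containing $v$ if $\overline{G}$ is disconnected; otherwise (both connected, in which case the maximal proper modules of $G$ partition $V$) the maximal proper module of $G$ containing $v$; if $|V|=1$, $D_G(v)=\{v\}$. Define $D_{0,v}=V$ and $D_{i+1,v}=D_{G[D_{i,v}]}(v)$ for $i\in[0,n-1]$. For $v,w\in V$, $M_{v,w}$ is the intersection of all modules of $G$ containing $v$ and $w$. Define $w_1\prec_v w_2$ iff $M_{v,w_2}\subsetneq M_{v,w_1}$; $\prec_v$ is a strict weak order, so incomparability $\sim_v$ w.r.t. $\prec_v$ is an equivalence relation on $V$ with classes $[w]_v$, and $\prec_v$ induces a strict linear order on $V/{\sim_v}$. $p_v\colon V/{\sim_v}\to\mathbb{N}$ assigns to each class its position in this strict linear order, the smallest class receiving $0$. *)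

(* A simple graph G = (T, e): T a finType (vertex set V),
   e a symmetric irreflexive relation. Induced subgraphs G[X] are given by
   their vertex set X : {set T}. *)
From mathcomp Require Import all_boot all_order.
Set Implicit Arguments. Unset Strict Implicit. Unset Printing Implicit Defensive.

Section ModDecomp.
Variables (T : finType) (e : rel T).

Definition restr (X : {set T}) : rel T :=
  [rel x y | [&& x \in X, y \in X & e x y]].
Definition corestr (X : {set T}) : rel T :=
  [rel x y | [&& x \in X, y \in X, x != y & ~~ e x y]].

Definition is_module (X M : {set T}) : bool :=
  [&& M != set0, M \subset X &
   [forall u in X :\: M, [forall m in M, e u m] || [forall m in M, ~~ e u m]]].

Definition max_proper_module (X M : {set T}) : bool :=
  [&& is_module X M, M != X &
   [forall N : {set T}, [&& is_module X N, N != X & M \subset N] ==> (N == M)]].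

Definition connectedb (r : rel T) (X : {set T}) : bool :=
  [forall x in X, forall y in X, connect r x y].

Definition comp (r : rel T) (X : {set T}) (v : T) : {set T} :=
  [set u in X | connect r v u].

Definition DG (X : {set T}) (v : T) : {set T} :=
  if #|X| <= 1 then [set v]
  else if ~~ connectedb (restr X) X then comp (restr X) X v
  else if ~~ connectedb (corestr X) X then comp (corestr X) X v
  else \bigcup_(M | max_proper_module X M && (v \in M)) M.

Definition Dseq (i : nat) (v : T) : {set T} := iter i (fun X => DG X v) setT.

Definition Mvw (v w : T) : {set T} :=
  \bigcap_(M : {set T} | is_module setT M && (v \in M) && (w \in M)) M.

Definition precv (v w1 w2 : T) : bool := Mvw v w2 \proper Mvw v w1.

Definition clsv (v w : T) : {set T} :=
  [set w' | ~~ precv v w w' && ~~ precv v w' w].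

(* p_v([w]_v): position of [w]_v in the strict linear order on V/~_v,
   i.e. the number of classes strictly below [w]_v *)
Definition pv (v w : T) : nat := #|[set clsv v w' | w' in [set w' | precv v w' w]]|.

Definition Sset (i : nat) (v : T) : {set T} :=
  v |: \bigcup_(w | pv v w == i) Mvw v w.

End ModDecomp.

From mathcomp Require Import all_boot all_order.
Set Implicit Arguments. Unset Strict Implicit. Unset Printing Implicit Defensive.

(* Each D_{i+1,v} is a proper module of G[D_{i,v}] containing v and comparable
   with every module of G containing v: when G[D_{i,v}] or its complement is
   disconnected it is the component of v, and a module containing v either lies
   inside it or is a union of components; otherwise it is the unique maximal
   proper module containing v.  If r is the last index with w in D_{r,v}, this
   squeezes M_{v,w} between D_{r+1,v} (strictly) and D_{r,v}, while vertices
   dropped at the same step have non-nested hulls with v.  So w1 <_v w2 iff w1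
   is dropped before w2, p_v([w]_v) = r, and the formula for D_{i,v} follows. *)

Section Modules.
Variables (T : finType) (e : rel T).
Implicit Types (X Y Z M N : {set T}) (u v w x : T).

Lemma moduleP X M :
  reflect [/\ M != set0, M \subset X &
           {in X :\: M & M & M, forall u m1 m2, e u m1 = e u m2}]
          (is_module e X M).
Proof.
apply: (iffP and3P) => -[M0 MX HM]; split=> //.
  move=> u m1 m2 uXM m1M m2M.
  case/orP: (forall_inP HM u uXM) => /forall_inP H.
    by rewrite (H m1 m1M) (H m2 m2M).
  by rewrite (negbTE (H m1 m1M)) (negbTE (H m2 m2M)).
apply/forall_inP=> u uXM; have [m0 m0M] := set0Pn _ M0.
apply/orP; case: (boolP (e u m0)) => eum0; [left | right];
  by apply/forall_inP=> m mM; rewrite (HM u m m0).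
Qed.

Lemma module_self X : X != set0 -> is_module e X X.
Proof. by move=> X0; apply/moduleP; split=> // u; rewrite setDv inE. Qed.

Lemma module_set1 X v : v \in X -> is_module e X [set v].
Proof.
move=> vX; apply/moduleP; split; rewrite ?sub1set //.
  by apply/set0Pn; exists v; rewrite inE.
by move=> u m1 m2 _ /set1P-> /set1P->.
Qed.

Lemma module_trans Z X Y : is_module e Z X -> is_module e X Y -> is_module e Z Y.
Proof.
case/moduleP=> _ XZ HX /moduleP[Y0 YX HY]; apply/moduleP.
split=> [||u m1 m2]; rewrite ?(subset_trans YX XZ) //.
rewrite !inE => /andP[uY uZ] m1Y m2Y; have [uX|uX] := boolP (u \in X).
  by apply: HY; rewrite ?inE ?uY.
by apply: HX; rewrite ?inE ?uX ?(subsetP YX).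
Qed.

Lemma module_restr Z X M :
  is_module e Z M -> M \subset X -> X \subset Z -> is_module e X M.
Proof.
case/moduleP=> M0 _ HM MX XZ; apply/moduleP; split=> // u m1 m2.
by rewrite !inE => /andP[uM /(subsetP XZ) uZ]; apply: HM; rewrite inE uM.
Qed.

Lemma moduleU X M N x : is_module e X M -> is_module e X N ->
  x \in M -> x \in N -> is_module e X (M :|: N).
Proof.
case/moduleP=> _ MX HM /moduleP[_ NX HN] xM xN; apply/moduleP; split.
- by apply/set0Pn; exists x; rewrite inE xM.
- by rewrite subUset MX NX.
move=> u m1 m2; rewrite !inE negb_or => /andP[/andP[uM uN] uX].
have eux m : (m \in M) || (m \in N) -> e u m = e u x.
  by case/orP=> mMN; [apply: HM | apply: HN]; rewrite ?inE ?uM ?uN ?uX.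
by move=> /eux-> /eux->.
Qed.

(* [hull setT v w] is [Mvw e v w] by conversion, which is used silently below. *)
Definition hull X v w : {set T} :=
  \bigcap_(M | is_module e X M && (v \in M) && (w \in M)) M.

Lemma hullP X v w x :
  reflect (forall M, is_module e X M -> v \in M -> w \in M -> x \in M)
          (x \in hull X v w).
Proof.
apply: (iffP bigcapP) => [H M mM vM wM | H M /andP[/andP[]]]; last exact: H.
by apply: H; rewrite mM vM wM.
Qed.

Lemma hull_sub X v w M :
  is_module e X M -> v \in M -> w \in M -> hull X v w \subset M.
Proof. by move=> mM vM wM; apply/subsetP=> x /hullP; apply. Qed.

Lemma mem_hull X v w : w \in hull X v w.
Proof. by apply/hullP. Qed.

Lemma hull_trans X v w x : x \in hull X v w -> hull X v x \subset hull X v w.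
Proof.
move/hullP=> xH; apply/subsetP=> y /hullP yH; apply/hullP=> M mM vM wM.
exact: yH (xH M mM vM wM).
Qed.

Definition strong_at v X :=
  forall M, is_module e setT M -> v \in M -> M \subset X \/ X \subset M.

Lemma hull_strong X v w : is_module e setT X -> strong_at v X ->
  v \in X -> w \in X -> hull setT v w = hull X v w.
Proof.
move=> mX sX vX wX; apply/eqP; rewrite eqEsubset; apply/andP; split.
  by apply/subsetP=> x /hullP xH; apply/hullP=> M mM; apply: xH (module_trans mX mM).
apply/subsetP=> x xH; apply/hullP=> M mM vM wM; case: (sX M mM vM) => [MX|XM].
  exact: subsetP (hull_sub (module_restr mM MX (subsetT X)) vM wM) x xH.
have mXX : is_module e X X by apply: module_self; apply/set0Pn; exists v.
exact: subsetP XM x (subsetP (hull_sub mXX vX wX) x xH).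
Qed.

Definition flat X v (A : {set T}) :=
  {in A &, forall w w', w \in hull X v w' -> w' \in hull X v w}.

Lemma flat_not_precv v A : flat setT v A -> {in A &, forall w w', ~~ precv e v w w'}.
Proof.
move=> fA w w' wA w'A; apply/negP; rewrite /precv properE => /andP[sub].
by rewrite hull_trans // fA // (subsetP sub) ?mem_hull.
Qed.

(* What one step of the decomposition achieves inside G[X]; by the last clause
   the dropped vertices X :\: Y are pairwise incomparable for <_v. *)
Definition splits X v Y :=
  [/\ is_module e X Y, v \in Y, Y != X,
      forall M, is_module e X M -> v \in M -> M \subset Y \/ Y \subset M
    & flat X v (X :\: Y)].

Lemma splits_lift X v Y : is_module e setT X -> strong_at v X -> splits X v Y ->
  [/\ is_module e setT Y, Y \proper X, strong_at v Y & flat setT v (X :\: Y)].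
Proof.
move=> mX sX [mY vY YX sY fY]; have YsubX : Y \subset X by case/moduleP: mY.
have vX := subsetP YsubX v vY.
split; first exact: module_trans mX mY.
- by rewrite properEneq YX YsubX.
- move=> M mM vM; have [MX|XM] := sX M mM vM.
    exact: sY (module_restr mM MX (subsetT X)) vM.
  by right; apply: subset_trans YsubX XM.
move=> w w' wXY w'XY; have [[wX _] [w'X _]] := (setDP wXY, setDP w'XY).
by rewrite !(hull_strong mX sX vX) //; apply: fY.
Qed.

End Modules.

Section Splitting.
Variables (T : finType) (e : rel T).
Hypothesis sym_e : symmetric e.
Implicit Types (X M N : {set T}) (u v w x : T).

Definition erel (b : bool) X : rel T := if b then corestr e X else restr e X.

Lemma erel_sym b X : symmetric (erel b X).
Proof.
move=> x y; case: b; rewrite /erel /restr /corestr /= sym_e ?(eq_sym x);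
by case: (x \in X); case: (y \in X).
Qed.

Lemma erel_dom b X x y : erel b X x y -> (x \in X) && (y \in X).
Proof. by case: b => /and3P[-> ->]. Qed.

Lemma erelE b X : {in X &, forall u c, u != c -> erel b X u c = e u c (+) b}.
Proof.
move=> u c uX cX uc.
by case: b; rewrite /erel /restr /corestr /= uX cX ?uc ?addbT ?addbF.
Qed.

Section Components.
Variables (X : {set T}) (b : bool).
Local Notation r := (erel b X).

Let r_csym : connect_sym r := sym_connect_sym (erel_sym b X).

Lemma comp_sub a : comp r X a \subset X.
Proof. by apply/subsetP=> x /setIdP[]. Qed.

Lemma mem_comp a : a \in X -> a \in comp r X a.
Proof. by move=> aX; rewrite inE aX connect0. Qed.

Lemma erel_module_const M : is_module e X M ->
  {in X :\: M & M & M, forall y m1 m2, r y m1 = r y m2}.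
Proof.
case/moduleP=> _ MX HM y m1 m2 yXM m1M m2M; have [yX yM] := setDP yXM.
have neq m : m \in M -> y != m by apply: contraTneq => <-.
by rewrite !erelE ?neq ?yX ?(subsetP MX) // (HM y m1 m2).
Qed.

Lemma module_closed M a c : is_module e X M -> a \in M -> c \in M ->
  ~~ connect r a c -> closed r M.
Proof.
move=> mM aM cM nac; apply: (intro_closed r_csym) => x y rxy xM.
apply: contraNT nac => yM; have /andP[_ yX] := erel_dom rxy.
have yXM : y \in X :\: M by rewrite inE yM yX.
have ryx : r y x by rewrite erel_sym.
have rya : r y a by rewrite (erel_module_const mM yXM aM xM).
have ryc : r y c by rewrite (erel_module_const mM yXM cM xM).
by apply: connect_trans (connect1 ryc); rewrite r_csym connect1.
Qed.

Lemma comp_sub_module M a c : is_module e X M -> a \in M -> c \in M ->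
  ~~ connect r a c -> comp r X a \subset M.
Proof.
move=> mM aM cM nac; apply/subsetP=> x /setIdP[_ ax].
by rewrite -(closed_connect (module_closed mM aM cM nac) ax).
Qed.

Lemma comp_module a c : a \in X -> c \in X ->
  is_module e X (comp r X a :|: comp r X c).
Proof.
move=> aX cX; set U := _ :|: _.
have UX : U \subset X by rewrite subUset !comp_sub.
have eU u m : u \in X :\: U -> m \in U -> e u m = b.
  move=> /setDP[uX uU] mU; have um : u != m by apply: contraNneq uU => ->.
  have nrum : ~~ r u m.
    apply: contra uU => rum; have rmu : r m u by rewrite erel_sym.
    case/setUP: mU => /setIdP[_ cm]; have cu := connect_trans cm (connect1 rmu);
      by rewrite !inE uX cu ?orbT.
  by move: nrum; rewrite (@erelE b X u m uX (subsetP UX m mU) um) negb_add => /eqP.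
apply/moduleP; split=> // [|u m1 m2 uXU m1U m2U]; last by rewrite !eU.
by apply/set0Pn; exists a; rewrite inE mem_comp.
Qed.

Lemma comp_splits v : v \in X -> ~~ connectedb r X -> splits e X v (comp r X v).
Proof.
move=> vX ncon; split.
- by rewrite -[comp r X v]setUid; apply: comp_module.
- exact: mem_comp.
- apply: contra ncon => /eqP Cv.
  apply/forall_inP=> x; rewrite -{1}Cv => /setIdP[_ vx].
  apply/forall_inP=> y; rewrite -{1}Cv => /setIdP[_ vy].
  by apply: connect_trans vy; rewrite r_csym.
- move=> M mM vM; have [MC|/subsetPn[c cM cNC]] := boolP (M \subset comp r X v).
    by left.
  have cX : c \in X by case/moduleP: mM => _ /subsetP->.
  by right; apply: comp_sub_module mM vM cM _; apply: contra cNC; rewrite inE cX.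
move=> w w' /setDP[wX wNC] /setDP[w'X _] /hullP wH.
have: w \in comp r X v :|: comp r X w'.
  by apply: wH; rewrite ?comp_module // inE mem_comp ?orbT.
rewrite inE (negbTE wNC) => /setIdP[_ w'w]; apply/hullP=> M mM vM wM.
have nwv : ~~ connect r w v by apply: contra wNC => wv; rewrite inE wX r_csym.
by apply: subsetP (comp_sub_module mM wM vM nwv) _ _; rewrite inE w'X r_csym.
Qed.

End Components.

Lemma erel_closed_cut X N c :
  {in X :\: N & N, forall x y, e x y = c} -> closed (erel c X) N.
Proof.
move=> cut; apply: (intro_closed (sym_connect_sym (erel_sym _ _))) => x y rxy xN.
have /andP[xX yX] := erel_dom rxy; apply: contraTT rxy => yN.
have yx : y != x by apply: contraNneq yN => ->.
by rewrite erel_sym erelE // cut ?addbb // inE yN.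
Qed.

Definition proper_module X N := is_module e X N && (N != X).

Lemma max_proper_moduleE X M :
  max_proper_module e X M = maxset (proper_module X) M.
Proof.
apply/and3P/maxsetP => [[mM MX /forallP Mmax]|[/andP[mM MX] Mmax]].
  split=> [|N /andP[mN NX] MN]; first by rewrite /proper_module mM MX.
  by apply/eqP; apply: implyP (Mmax N) _; rewrite mN NX MN.
split=> //; apply/forallP=> N; apply/implyP=> /and3P[mN NX MN].
by apply/eqP; apply: Mmax; rewrite /proper_module ?mN.
Qed.

Lemma max_proper_module_uniq X N1 N2 v :
  connectedb (restr e X) X -> connectedb (corestr e X) X ->
  maxset (proper_module X) N1 -> maxset (proper_module X) N2 ->
  v \in N1 -> v \in N2 -> N1 = N2.
Proof.
(* If N1 :|: N2 = X, e is constant across the cut (X :\: N2, N2), so the cut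
   disconnects G[X] or its complement. *)
move=> cr cc /maxsetP[/andP[m1 n1] max1] /maxsetP[/andP[m2 n2] max2] vN1 vN2.
have m12 := moduleU m1 m2 vN1 vN2.
have [U|UX] := eqVneq (N1 :|: N2) X; last first.
  have P12 : proper_module X (N1 :|: N2) by rewrite /proper_module m12 UX.
  by rewrite -(max1 _ P12 (subsetUl N1 N2)) (max2 _ P12 (subsetUr N1 N2)).
have [N2X N1X] : N2 \subset X /\ N1 \subset X by case/moduleP: m2; case/moduleP: m1.
have [a aX aN2] : exists2 a, a \in X & a \notin N2.
  by apply/subsetPn; apply: contra n2 => XN2; rewrite eqEsubset N2X.
have [c cN2 cN1] : exists2 c, c \in N2 & c \notin N1.
  by apply/subsetPn; apply: contra n1 => N21; rewrite -U eq_sym; apply/eqP/setUidPl.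
have inN1 x : x \in X :\: N2 -> x \in N1.
  by case/setDP; rewrite -U => /setUP[] // ->.
case/moduleP: m1 => _ _ H1; case/moduleP: m2 => _ _ H2.
have cut x y : x \in X :\: N2 -> y \in N2 -> e x y = e a c.
  move=> xXN2 yN2; have cXN1 : c \in X :\: N1 by rewrite inE cN1 (subsetP N2X).
  have aXN2 : a \in X :\: N2 by rewrite inE aN2.
  by rewrite (H2 x y c) // sym_e (H1 c x a) ?inN1 // sym_e.
have cl := erel_closed_cut cut.
have : connectedb (erel (e a c) X) X by case: (e a c).
move=> /forall_inP/(_ a aX)/forall_inP/(_ v (subsetP N1X v vN1)) av.
by move: (closed_connect cl av); rewrite vN2 (negbTE aN2).
Qed.

Lemma prime_splits X v : v \in X -> 1 < #|X| ->
  connectedb (restr e X) X -> connectedb (corestr e X) X ->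
  splits e X v (\bigcup_(M | max_proper_module e X M && (v \in M)) M).
Proof.
move=> vX X1 cr cc.
have [N0 maxN0 vN0] : exists2 N, maxset (proper_module X) N & v \in N.
  have P1 : proper_module X [set v].
    by rewrite /proper_module module_set1 //; apply: contraTneq X1 => <-; rewrite cards1.
  by have [N maxN] := maxset_exists P1; rewrite sub1set; exists N.
have below M : is_module e X M -> v \in M -> M != X -> M \subset N0.
  move=> mM vM MX; have [|N maxN MN] := @maxset_exists _ (proper_module X) M.
    by rewrite /proper_module mM.
  by rewrite -(max_proper_module_uniq cr cc maxN maxN0 (subsetP MN v vM) vN0).
have -> : \bigcup_(M | max_proper_module e X M && (v \in M)) M = N0.
  apply/eqP; rewrite eqEsubset (bigcup_sup N0) ?max_proper_moduleE ?maxN0 ?vN0 //.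
  rewrite andbT; apply/bigcupsP=> M /andP[]; rewrite max_proper_moduleE => maxM vM.
  by rewrite (max_proper_module_uniq cr cc maxM maxN0 vM vN0).
have /andP[mN0 N0X] := maxsetp maxN0.
split=> // [M mM vM|w w' /setDP[_ wN0] /setDP[w'X _] _].
  have [->|MX] := eqVneq M X; last by left; apply: below.
  by right; case/moduleP: mN0.
apply/hullP=> M mM vM wM; have [-> //|MX] := eqVneq M X.
by move: wN0; rewrite (subsetP (below M mM vM MX)).
Qed.

Lemma DG_splits X v : v \in X -> 1 < #|X| -> splits e X v (DG e X v).
Proof.
move=> vX X1; rewrite /DG leqNgt X1 /=.
case: ifP => [ncr|/negbFE cr]; first exact: (@comp_splits X false v).
case: ifP => [ncc|/negbFE cc]; first exact: (@comp_splits X true v).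
exact: prime_splits.
Qed.

End Splitting.

Section Decomposition.
Variables (T : finType) (e : rel T) (v : T).
Hypothesis sym_e : symmetric e.
Local Notation D j := (Dseq e j v).

Lemma DseqS j : D j.+1 = DG e (D j) v.
Proof. by []. Qed.

Lemma DG_set1 : DG e [set v] v = [set v].
Proof. by rewrite /DG cards1. Qed.

Lemma Dseq_invariant j :
  [/\ is_module e setT (D j), v \in D j & strong_at e v (D j)].
Proof.
elim: j => [|j [mD vD sD]].
  split; rewrite ?in_setT //; last by move=> M _ _; left; apply: subsetT.
  by apply: module_self; apply/set0Pn; exists v; rewrite in_setT.
rewrite DseqS; have [D1|D1] := leqP #|D j| 1.
  rewrite /DG D1; split; rewrite ?set11 ?module_set1 ?in_setT //.
  by move=> M _ vM; right; rewrite sub1set.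
have splitD := DG_splits sym_e vD D1; have [_ vY _ _ _] := splitD.
by have [mY _ sY _] := splits_lift mD sD splitD.
Qed.

Lemma mem_Dseq_v j : v \in D j.
Proof. by case: (Dseq_invariant j). Qed.

Lemma Dseq_step j : 1 < #|D j| ->
  D j.+1 \proper D j /\ flat e setT v (D j :\: D j.+1).
Proof.
move=> D1; have [mD vD sD] := Dseq_invariant j.
by have [_ pD _ fD] := splits_lift mD sD (DG_splits sym_e vD D1).
Qed.

Lemma Dseq_small j : #|D j| <= 1 -> D j = [set v].
Proof.
move=> D1; apply/eqP; rewrite eq_sym eqEcard sub1set mem_Dseq_v cards1; exact: D1.
Qed.

Lemma Dseq_subS j : D j.+1 \subset D j.
Proof.
have [D1|D1] := leqP #|D j| 1; last exact: proper_sub (Dseq_step D1).1.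
by rewrite DseqS Dseq_small // DG_set1.
Qed.

Lemma Dseq_sub j k : j <= k -> D k \subset D j.
Proof.
move/subnK <-; elim: (k - j) => [|n IHn]; first exact: subxx.
by rewrite addSn; apply: subset_trans (Dseq_subS _) IHn.
Qed.

Lemma Dseq_eventually_small : exists j, #|D j| <= 1.
Proof.
have shrink j : #|D j| <= 1 \/ #|D j| + j <= #|T|.
  elim: j => [|j IHj]; first by right; rewrite addn0 cardsT.
  have [D1|D1] := leqP #|D j| 1.
    by left; rewrite DseqS Dseq_small // DG_set1 cards1.
  right; case: IHj => [|IHj]; first by rewrite leqNgt D1.
  rewrite addnS -addSn; apply: leq_trans IHj.
  by rewrite leq_add2r proper_card // (Dseq_step D1).1.
exists #|T|; have [//|] := shrink #|T|.
by rewrite -[X in _ <= X]add0n leq_add2r leqn0 => /eqP->.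
Qed.

Definition depth := ex_minn Dseq_eventually_small.

Lemma Dseq_depth j : depth <= j -> D j = [set v].
Proof.
rewrite /depth; case: ex_minnP => d dsmall _ /subnK <-.
elim: (j - d) => [|n IHn]; first exact: Dseq_small.
by rewrite addSn DseqS IHn DG_set1.
Qed.

Lemma small_Dseq j : (#|D j| <= 1) = (depth <= j).
Proof.
apply/idP/idP => [|/Dseq_depth->]; last by rewrite cards1.
by rewrite /depth; case: ex_minnP => d _; apply.
Qed.

Lemma rank_exists w : exists j, (w \notin D j.+1) || (depth <= j).
Proof. by exists depth; rewrite leqnn orbT. Qed.

(* The last index at which w is in the sequence; v is never dropped and gets
   rank [depth]. *)
Definition rank w := ex_minn (rank_exists w).

Lemma rank_le_depth w : rank w <= depth.
Proof. by rewrite /rank; case: ex_minnP => k _; apply; rewrite leqnn orbT. Qed.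

Lemma rank_v : rank v = depth.
Proof.
rewrite /rank; case: (ex_minnP (rank_exists v)) => m dm mmin.
rewrite (mem_Dseq_v m.+1) /= in dm.
by apply/eqP; rewrite eqn_leq dm mmin ?leqnn ?orbT.
Qed.

Lemma mem_Dseq_rank w : w \in D (rank w).
Proof.
rewrite /rank; case: ex_minnP => [[|k]] // _ kmin.
by apply/negPn/negP => wk; have := kmin k; rewrite wk ltnn => /(_ isT).
Qed.

Lemma rank_lt w : w != v -> rank w < depth.
Proof.
move=> wv; rewrite ltnNge; apply: contra wv => /Dseq_depth Dr.
by move: (mem_Dseq_rank w); rewrite Dr inE.
Qed.

Lemma notin_Dseq_rankS w : w != v -> w \notin D (rank w).+1.
Proof.
move/rank_lt; rewrite /rank; case: ex_minnP => k /orP[//|dk] _.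
by rewrite ltnNge dk.
Qed.

Lemma mem_Dseq w j : w != v -> (w \in D j) = (j <= rank w).
Proof.
move=> wv; apply/idP/idP => [|jr]; last exact: subsetP (Dseq_sub jr) _ (mem_Dseq_rank w).
apply: contraLR; rewrite -ltnNge => /Dseq_sub/subsetP sub.
exact: contra (sub w) (notin_Dseq_rankS wv).
Qed.

Lemma Mvw_sub_Dseq_rank w : Mvw e v w \subset D (rank w).
Proof.
by have [mD vD _] := Dseq_invariant (rank w); apply: hull_sub mD vD (mem_Dseq_rank w).
Qed.

Lemma Dseq_rankS_sub_Mvw w : w != v -> D (rank w).+1 \subset Mvw e v w.
Proof.
move=> wv; have [_ _ sD] := Dseq_invariant (rank w).+1.
apply/subsetP=> x xD; apply/hullP=> M mM vM wM.
have [MD|DM] := sD M mM vM; last exact: subsetP DM x xD.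
by move: (notin_Dseq_rankS wv); rewrite (subsetP MD w wM).
Qed.

Lemma rank_lt_precv w1 w2 : rank w1 < rank w2 -> precv e v w1 w2.
Proof.
move=> lt12; have w1v : w1 != v.
  by apply: contraTneq lt12 => ->; rewrite rank_v -leqNgt rank_le_depth.
have sub : Mvw e v w2 \subset D (rank w1).+1.
  exact: subset_trans (Mvw_sub_Dseq_rank w2) (Dseq_sub lt12).
apply/properP; split; first exact: subset_trans sub (Dseq_rankS_sub_Mvw w1v).
exists w1; first exact: mem_hull.
exact: contra (subsetP sub w1) (notin_Dseq_rankS w1v).
Qed.

Lemma precv_rank w1 w2 : precv e v w1 w2 = (rank w1 < rank w2).
Proof.
have [lt12|lt21|eq12] := ltngtP (rank w1) (rank w2); first exact: rank_lt_precv.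
  apply/negP=> p12; have p21 := rank_lt_precv lt21.
  by move: (proper_trans p12 p21); rewrite properxx.
have [w1E|w1v] := eqVneq w1 v.
  have w2E : w2 = v.
    by apply/eqP/negPn/negP => /rank_lt; rewrite -eq12 w1E rank_v ltnn.
  by rewrite /precv w1E w2E properxx.
have w2v : w2 != v.
  by apply/negP => /eqP w2E; move: (rank_lt w1v); rewrite eq12 w2E rank_v ltnn.
have D1 : 1 < #|D (rank w1)| by rewrite ltnNge small_Dseq -ltnNge rank_lt.
apply/negbTE/(flat_not_precv (Dseq_step D1).2).
  by rewrite inE mem_Dseq_rank notin_Dseq_rankS.
by rewrite inE eq12 mem_Dseq_rank notin_Dseq_rankS.
Qed.

Lemma rank_surj k : k <= depth -> exists w, rank w = k.
Proof.
rewrite leq_eqVlt => /predU1P[->|kd]; first by exists v; rewrite rank_v.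
have D1 : 1 < #|D k| by rewrite ltnNge small_Dseq -ltnNge.
have [/properP[_ [x xk xNk1]] _] := Dseq_step D1.
have xv : x != v by apply: contraNneq xNk1 => ->; apply: mem_Dseq_v.
by exists x; apply/eqP; rewrite eqn_leq leqNgt -!mem_Dseq // xNk1 xk.
Qed.

Definition level k := [set x | rank x == k].

Lemma clsv_rank w : clsv e v w = level (rank w).
Proof. by apply/setP=> x; rewrite !inE !precv_rank -!leqNgt eqn_leq andbC. Qed.

Lemma pv_rank w : pv e v w = rank w.
Proof.
have below_ord (k : 'I_(rank w)) : k <= depth.
  exact: leq_trans (ltnW (ltn_ord k)) (rank_le_depth w).
rewrite /pv; have -> : [set clsv e v w' | w' in [set w' | precv e v w' w]] =
          [set level k | k : 'I_(rank w)].
  apply/setP=> S; apply/imsetP/imsetP => [[w' w'w ->]|[k _ ->]].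
    by rewrite inE precv_rank in w'w; exists (Ordinal w'w); rewrite ?clsv_rank.
  have [x rx] := rank_surj (below_ord k).
  by exists x; rewrite ?inE ?precv_rank ?clsv_rank rx.
rewrite card_imset ?card_ord // => k1 k2 lvl; apply: val_inj.
have [x rx] := rank_surj (below_ord k1).
by move/setP/(_ x): lvl; rewrite !inE rx eqxx => /esym/eqP.
Qed.

Lemma Dseq_Sset i : D i = Sset e i v.
Proof.
apply/setP=> x; rewrite /Sset; apply/idP/setU1P => [xD|[xv|/bigcupP[w /eqP wi xM]]].
- have [->|xv] := eqVneq x v; [by left | right; apply/bigcupP].
  have ix : i <= rank x by rewrite -mem_Dseq.
  move: ix; rewrite leq_eqVlt => /predU1P[ix|ix].
    by exists x; rewrite ?pv_rank ?ix ?mem_hull.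
  have [w rw] := rank_surj (leq_trans (ltnW ix) (rank_le_depth x)).
  have wv : w != v.
    by apply: contraTneq ix => wE; rewrite -rw wE rank_v -leqNgt rank_le_depth.
  exists w; first by rewrite pv_rank rw.
  by apply: (subsetP (Dseq_rankS_sub_Mvw wv)); rewrite mem_Dseq // rw.
- by rewrite xv mem_Dseq_v.
by rewrite -wi pv_rank; apply: (subsetP (Mvw_sub_Dseq_rank w)).
Qed.

End Decomposition.

Theorem lemma3p15 (T : finType) (e : rel T) (esym : symmetric e)
  (eirr : irreflexive e) :
  forall (i : nat) (v : T), i <= #|T| -> Dseq e i v = Sset e i v.
Proof. by move=> i v _; apply: Dseq_Sset. Qed.
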